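(* Let $x\in\mathbb{R}^d$, $d\ge1$, and run the following procedure. Compute $(\theta,p)=\mathrm{csa}_{\text{even}}(x)$. If $\theta^\top\Pi_{[0,1]^d}(x)\le p$, stop. Otherwise set $R:=\{1,\dots,d\}$, $q:=p$ and repeat the following loop: if $|R|=1$, stop; compute $v_R := x_R - \frac{\theta_R^\top x_R - q}{|R|}\theta_R$; let $S := \{j\in R : (v_j>1 \text{ and } \theta_j=1) \text{ or } (v_j<0\text{ and }\theta_j=-1)\}$; if $S=\emptyset$, stop; otherwise replace $q$ by $q - |\{j\in S:\theta_j=1\}|$ and $R$ by $R\setminus S$, and repeat. Then $R$ never becomes empty, i.e. in every execution of the loop $S\neq R$.
   Context: For $R\subseteq\{1,\dots,d\}$ and $u\in\mathbb{R}^d$, $u_R$ denotes the subvector $(u_j)_{j\in R}$; $\Pi_{[0,1]^d}$ is componentwise clipping to $[0,1]$. $\mathrm{csa}_{\text{even}}(x)$: set $\theta_j=1$ if $x_j>1/2$ and $\theta_j=-1$ otherwise; if $|\{j:\theta_j=1\}|$ is even, choose $j^*\in\arg\min_j|x_j-1/2|$ and replace $\theta_{j^*}$ by $-\theta_{j^*}$; set $p=|\{j:\theta_j=1\}|-1$; output $(\theta,p)$. (This is the paper's Algorithm 1, where $|R|$ is the variable $l$.) *)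

From HB Require Import structures.
From mathcomp Require Import all_boot all_order all_algebra.
From mathcomp Require Import reals.
Set Implicit Arguments. Unset Strict Implicit. Unset Printing Implicit Defensive.
Import Order.TTheory GRing.Theory Num.Theory.
Local Open Scope ring_scope.

Section CSA.
Variables (R : realType) (d : nat) (x : 'I_d -> R) (jstar : 'I_d).

Definition theta0 (j : 'I_d) : R := if x j > 2^-1 then 1 else -1.

(* csa_even(x), with the tie-breaking index j* supplied explicitly
   (the theorem requires j* to be a minimiser of |x_j - 1/2|) *)
Definition csa_theta (j : 'I_d) : R :=
  if ~~ odd #|[set i | theta0 i == 1]| && (j == jstar) then - theta0 j
  else theta0 j.

Definition csa_p : R := (#|[set i | csa_theta i == 1]|)%:R - 1.

Definition clip01 (y : R) : R := Num.min (Num.max y 0) 1.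

Definition initial_stop : bool :=
  \sum_(j < d) csa_theta j * clip01 (x j) <= csa_p.

Definition vR (Rs : {set 'I_d}) (q : R) (j : 'I_d) : R :=
  x j - ((\sum_(i in Rs) csa_theta i * x i) - q) / (#|Rs|)%:R * csa_theta j.

Definition Sset (Rs : {set 'I_d}) (q : R) : {set 'I_d} :=
  [set j in Rs | ((vR Rs q j > 1) && (csa_theta j == 1))
              || ((vR Rs q j < 0) && (csa_theta j == -1))].

Definition loop_step (st : {set 'I_d} * R) : {set 'I_d} * R :=
  let S := Sset st.1 st.2 in
  (st.1 :\: S, st.2 - (#|[set j in S | csa_theta j == 1]|)%:R).

Definition loop_continues (st : {set 'I_d} * R) : bool :=
  (#|st.1| != 1%N) && (Sset st.1 st.2 != set0).

Definition loop_state (n : nat) : {set 'I_d} * R :=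
  iter n loop_step (setT, csa_p).

End CSA.

(** The loop keeps the invariant q = #{j in R | theta_j = 1} - 1.  Since v_R is
    the projection of x_R onto the hyperplane theta_R^T y = q, the signed sum
    of the entries of v_R is q.  If S were all of R, every term theta_j v_j
    would exceed [theta_j = 1], forcing q > #{j in R | theta_j = 1} = q + 1.
    So S is a proper subset of R, R \ S is nonempty and the invariant passes
    to the next state.  Neither the choice of j* nor the initial test matters. *)
From HB Require Import structures.
From mathcomp Require Import all_boot all_order all_algebra.
From mathcomp Require Import reals.
Import Order.TTheory GRing.Theory Num.Theory.
Local Open Scope ring_scope.

Lemma natr_card_setI_pred (R : pzSemiRingType) (I : finType) (A : {set I})
    (P : pred I) :
  (#|[set i in A | P i]|)%:R = \sum_(i in A) (P i)%:R :> R.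
Proof.
rewrite -sum1_card natr_sum big_mkcond [RHS]big_mkcond /=.
by apply: eq_bigr => i _; rewrite !inE; case: (i \in A); case: (P i).
Qed.

Lemma card_setI_predD (I : finType) {A B : {set I}} (P : pred I) :
  B \subset A ->
  #|[set i in A | P i]| = (#|[set i in A :\: B | P i]| + #|[set i in B | P i]|)%N.
Proof.
move=> sBA; rewrite -(cardsID B [set i in A | P i]) addnC.
congr (_ + _)%N; apply: eq_card => i; rewrite !inE ?andbA //.
by rewrite andbC; case iB: (i \in B) => //=; rewrite (subsetP sBA i iB).
Qed.

Lemma sum_sign_projection (F : fieldType) (I : finType) (A : {set I})
    (s y : I -> F) (q : F) :
  (forall i, s i * s i = 1) -> (#|A|)%:R != 0 :> F ->
  \sum_(i in A) s i * (y i - ((\sum_(j in A) s j * y j) - q) / (#|A|)%:R * s i)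
    = q.
Proof.
move=> s2 nA; set c := _ / _.
under eq_bigr => i _ do rewrite mulrBr (mulrC c) mulrA s2 mul1r.
by rewrite sumrB sumr_const -mulr_natr divfK // opprB addrC subrK.
Qed.

Section Loop.
Variables (R : realType) (d : nat) (x : 'I_d -> R) (jstar : 'I_d).
Local Notation theta := (csa_theta x jstar).
Local Notation vR := (vR x jstar).
Local Notation Sset := (Sset x jstar).

Definition npos (Rs : {set 'I_d}) : nat := #|[set j in Rs | theta j == 1]|.

Definition loop_invariant (st : {set 'I_d} * R) : Prop :=
  st.1 != set0 /\ st.2 = (npos st.1)%:R - 1.

Lemma csa_theta_sign j : theta j = 1 \/ theta j = -1.
Proof. by rewrite /csa_theta /theta0; do 2 case: ifP => _; rewrite ?opprK; auto. Qed.

Lemma csa_theta_sq j : theta j * theta j = 1.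
Proof. by case: (csa_theta_sign j) => ->; rewrite ?mulrNN mulr1. Qed.

Lemma sum_csa_theta_vR (Rs : {set 'I_d}) q :
  Rs != set0 -> \sum_(i in Rs) theta i * vR Rs q i = q.
Proof.
move=> Rs0; apply: sum_sign_projection; first exact: csa_theta_sq.
by rewrite pnatr_eq0 -lt0n card_gt0.
Qed.

Lemma Sset_sub Rs q : Sset Rs q \subset Rs.
Proof. by apply/subsetP => i; rewrite inE => /andP[]. Qed.

Lemma Sset_indicator_lt Rs q i :
  i \in Sset Rs q -> ((theta i == 1)%:R : R) < theta i * vR Rs q i.
Proof.
rewrite inE => /andP[_ /orP[/andP[v_gt1 /eqP->] | /andP[v_lt0 /eqP->]]].
  by rewrite eqxx mul1r.
have -> : (-1 == 1 :> R) = false by rewrite lt_eqF // (lt_trans (ltrN10 R) ltr01).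
by rewrite mulN1r oppr_gt0.
Qed.

Lemma Sset_neq {Rs q} : loop_invariant (Rs, q) -> Sset Rs q != Rs.
Proof.
case=> /= Rs0 q_npos; apply/eqP => SRs.
have : (npos Rs)%:R <= \sum_(i in Rs) theta i * vR Rs q i.
  rewrite /npos natr_card_setI_pred; apply: ler_sum => i iRs.
  by apply/ltW/Sset_indicator_lt; rewrite SRs.
by rewrite sum_csa_theta_vR // q_npos lerDl oppr_ge0 ler10.
Qed.

Lemma loop_step_invariant st :
  loop_invariant st -> loop_invariant (loop_step x jstar st).
Proof.
case: st => Rs q inv; have SRs := Sset_neq inv; case: inv => /= _ q_npos.
split => /=.
  by apply: contra SRs; rewrite setD_eq0 eqEsubset Sset_sub.
by rewrite {1}q_npos /npos (card_setI_predD _ _ (Sset_sub Rs q)) natrD addrAC addrK.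
Qed.

Lemma loop_state_invariant n : (0 < d)%N -> loop_invariant (loop_state x jstar n).
Proof.
move=> d_gt0; elim: n => [|n]; last exact: loop_step_invariant.
split => /=; first by apply/set0Pn; exists (Ordinal d_gt0); rewrite inE.
by rewrite /csa_p /npos; congr (_%:R - 1); apply: eq_card => i; rewrite !inE.
Qed.

End Loop.

Theorem theorem9 (R : realType) (d : nat) (x : 'I_d -> R) (jstar : 'I_d) :
  (0 < d)%N ->
  (forall j : 'I_d, `|x jstar - 2^-1| <= `|x j - 2^-1|) ->
  ~~ initial_stop x jstar ->
  forall n : nat,
    (forall k : nat, (k < n)%N -> loop_continues x jstar (loop_state x jstar k)) ->
    #|(loop_state x jstar n).1| != 1%N ->
    Sset x jstar (loop_state x jstar n).1 (loop_state x jstar n).2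
      != (loop_state x jstar n).1.
Proof.
move=> d_gt0 _ _ n _ _.
exact/Sset_neq/loop_state_invariant.
Qed.
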